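(* Let $(A,\circ,[\cdot,\cdot],\mathcal{B})$ be a finite-dimensional quadratic dual pre-Poisson algebra and let $\phi:A\to A^*$ be the linear isomorphism $\langle\phi(x),y\rangle=\mathcal{B}(x,y)$. Let $r\in A\otimes A$ be symmetric. Then $r$ is a solution of the permutative-Leibniz Yang–Baxter equation if and only if $P_r:=\tilde r\circ\phi:A\to A$ is a Rota–Baxter operator on $(A,\circ,[\cdot,\cdot])$.
   Context: Field $\mathbb{F}$ of characteristic $0$. Dual pre-Poisson algebra: $x\circ(y\circ z)=(x\circ y)\circ z=(y\circ x)\circ z$; $[x,[y,z]]=[[x,y],z]+[y,[x,z]]$; $[x,y\circ z]=[x,y]\circ z+y\circ[x,z]$; $[x\circ y,z]=x\circ[y,z]+y\circ[x,z]$; $[x,y]\circ z=-[y,x]\circ z$. Quadratic: $\mathcal{B}$ is a nondegenerate skew-symmetric bilinear form with $\mathcal{B}(x\circ y,z)=\mathcal{B}(x,y\circ z-z\circ y)$ and $\mathcal{B}([x,y],z)=\mathcal{B}(x,[y,z]+[z,y])$. $\tilde r:A^*\to A$ is $\langle\tilde r(u^* ),v^*\rangle=\langle r,u^*\otimes v^*\rangle$. A Rota–Baxter operator is a linear $P:A\to A$ with $P(x)\circ P(y)=P(P(x)\circ y+x\circ P(y))$ and $[P(x),P(y)]=P([P(x),y]+[x,P(y)])$. PLYBE: with $x\blacksquare y=x\circ y-y\circ x$, $x\square y=[x,y]+[y,x]$, for $r=\sum_i a_i\otimes b_i$, $\mathbf{P}(r)=\sum_{i,j}\big(a_i\otimes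 a_j\otimes b_i\circ b_j-a_i\otimes b_i\circ a_j\otimes b_j+a_i\blacksquare a_j\otimes b_j\otimes b_i\big)$, $\mathbf{L}(r)=\sum_{i,j}\big(a_i\otimes a_j\otimes[b_i,b_j]+a_i\otimes[b_i,a_j]\otimes b_j-a_i\square a_j\otimes b_i\otimes b_j\big)$; $r$ is a solution if $\mathbf{P}(r)=\mathbf{L}(r)=0$; symmetric means flip-invariant. *)

(* A finite-dimensional F-vector space A is modelled as 'rV[F]_n,
   its dual as 'rV[F]_n with the standard pairing, tensors by coordinates. *)
From mathcomp Require Import all_boot all_order all_algebra.
Set Implicit Arguments. Unset Strict Implicit. Unset Printing Implicit Defensive.
Import Order.TTheory GRing.Theory Num.Theory.
Local Open Scope ring_scope.

Section Defs.
Variables (F : fieldType) (n : nat).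
Local Notation A := 'rV[F]_n.

Definition evec (j : 'I_n) : A := delta_mx 0 j.

Definition pairing (u x : A) : F := \sum_(j < n) u 0 j * x 0 j.

Definition bilinear_map (W : lmodType F) (f : A -> A -> W) : Prop :=
  (forall (a : F) (x y z : A), f (a *: x + y) z = a *: f x z + f y z) /\
  (forall (a : F) (x y z : A), f x (a *: y + z) = a *: f x y + f x z).

Definition dual_pre_Poisson (circ br : A -> A -> A) : Prop :=
  bilinear_map circ /\ bilinear_map br /\
  (forall x y z, circ x (circ y z) = circ (circ x y) z) /\
  (forall x y z, circ (circ x y) z = circ (circ y x) z) /\
  (forall x y z, br x (br y z) = br (br x y) z + br y (br x z)) /\
  (forall x y z, br x (circ y z) = circ (br x y) z + circ y (br x z)) /\
  (forall x y z, br (circ x y) z = circ x (br y z) + circ y (br x z)) /\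
  (forall x y z, circ (br x y) z = - circ (br y x) z).

Definition quadratic (circ br : A -> A -> A) (B : A -> A -> F) : Prop :=
  bilinear_map (B : A -> A -> F^o) /\
  (forall x y, B x y = - B y x) /\
  (forall x, (forall y, B x y = 0) -> x = 0) /\
  (forall x y z, B (circ x y) z = B x (circ y z - circ z y)) /\
  (forall x y z, B (br x y) z = B x (br y z + br z y)).

Definition phiB (B : A -> A -> F) (x : A) : A := \row_(j < n) B x (evec j).

Definition tens2 (x y : A) : 'M[F]_n := \matrix_(i, j) (x 0 i * y 0 j).
Definition tens3 (x y z : A) : {ffun 'I_n * 'I_n * 'I_n -> F} :=
  [ffun ijk => x 0 ijk.1.1 * y 0 ijk.1.2 * z 0 ijk.2].

(* r = \sum_i a_i (x) b_i, given by the list of pairs (a_i, b_i) *)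
Definition tensor_of (s : seq (A * A)) : 'M[F]_n := \sum_(p <- s) tens2 p.1 p.2 .

Definition symmetric_tensor (s : seq (A * A)) : Prop :=
  \sum_(p <- s) tens2 p.1 p.2 = \sum_(p <- s) tens2 p.2 p.1.

(* rtilde : dual -> A, <rtilde(u), v> = <r, u (x) v>, i.e. rtilde(u) = sum_i <u,a_i> b_i *)
Definition rtilde (s : seq (A * A)) (u : A) : A := \sum_(p <- s) pairing u p.1 *: p.2.

Definition PLYBE_P (circ : A -> A -> A) (s : seq (A * A)) :=
  \sum_(p <- s) \sum_(q <- s)
    (tens3 p.1 q.1 (circ p.2 q.2) - tens3 p.1 (circ p.2 q.1) q.2
     + tens3 (circ p.1 q.1 - circ q.1 p.1) q.2 p.2).

Definition PLYBE_L (br : A -> A -> A) (s : seq (A * A)) :=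
  \sum_(p <- s) \sum_(q <- s)
    (tens3 p.1 q.1 (br p.2 q.2) + tens3 p.1 (br p.2 q.1) q.2
     - tens3 (br p.1 q.1 + br q.1 p.1) p.2 q.2).

Definition PLYBE_solution (circ br : A -> A -> A) (s : seq (A * A)) : Prop :=
  PLYBE_P circ s = 0 /\ PLYBE_L br s = 0.

Definition Rota_Baxter (circ br : A -> A -> A) (P : A -> A) : Prop :=
  (forall (a : F) (x y : A), P (a *: x + y) = a *: P x + P y) /\
  (forall x y, circ (P x) (P y) = P (circ (P x) y + circ x (P y))) /\
  (forall x y, br (P x) (P y) = P (br (P x) y + br x (P y))).

End Defs.

(** For symmetric r the operator P_r is B-self-adjoint and may be read off
   either leg of r.  Contracting the legs of the 3-tensors P(r) and L(r) with
   phi(x), phi(y), phi(z) and using the invariance of B therefore gives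
   exactly B(z, P x ∘ P y - P (P x ∘ y + x ∘ P y)), resp. the same expression
   for the bracket.  As B is nondegenerate and phi is onto, a 3-tensor vanishes
   iff all these contractions do. *)
From HB Require Import structures.
From mathcomp Require Import all_boot all_order all_algebra ring.
Set Implicit Arguments. Unset Strict Implicit. Unset Printing Implicit Defensive.
Import GRing.Theory.
Local Open Scope ring_scope.

Section BilinearMaps.
Variables (F : fieldType) (n : nat) (W : lmodType F).
Variable m : 'rV[F]_n -> 'rV[F]_n -> W.
Hypothesis m_bilin : bilinear_map m.

Lemma bilin0l y : m 0 y = 0.
Proof.
have := m_bilin.1 1 0 0 y; rewrite !scale1r addr0 => m0D.
by apply: (addrI (m 0 y)); rewrite addr0 -m0D.
Qed.

Lemma bilin0r x : m x 0 = 0.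
Proof.
have := m_bilin.2 1 x 0 0; rewrite !scale1r addr0 => m0D.
by apply: (addrI (m x 0)); rewrite addr0 -m0D.
Qed.

Lemma bilinDl x y z : m (x + y) z = m x z + m y z.
Proof. by have := m_bilin.1 1 x y z; rewrite !scale1r. Qed.

Lemma bilinDr x y z : m x (y + z) = m x y + m x z.
Proof. by have := m_bilin.2 1 x y z; rewrite !scale1r. Qed.

Lemma bilinZl a x z : m (a *: x) z = a *: m x z.
Proof. by have := m_bilin.1 a x 0 z; rewrite !addr0 bilin0l addr0. Qed.

Lemma bilinZr a x z : m x (a *: z) = a *: m x z.
Proof. by have := m_bilin.2 a x z 0; rewrite !addr0 bilin0r addr0. Qed.

Lemma bilinBr x y z : m x (y - z) = m x y - m x z.
Proof. by rewrite bilinDr -[- z]scaleN1r bilinZr scaleN1r. Qed.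

Lemma bilin_suml (I : Type) (r : seq I) (f : I -> 'rV[F]_n) z :
  m (\sum_(i <- r) f i) z = \sum_(i <- r) m (f i) z.
Proof. by apply: (big_morph (m^~ z)) => [x y|]; rewrite ?bilinDl ?bilin0l. Qed.

Lemma bilin_sumr (I : Type) (r : seq I) (f : I -> 'rV[F]_n) x :
  m x (\sum_(i <- r) f i) = \sum_(i <- r) m x (f i).
Proof. by apply: (big_morph (m x)) => [y z|]; rewrite ?bilinDr ?bilin0r. Qed.

Lemma bilin_sumZ (I J : Type) (r : seq I) (r' : seq J) a u b v :
  m (\sum_(i <- r) a i *: u i) (\sum_(j <- r') b j *: v j) =
  \sum_(i <- r) \sum_(j <- r') (a i * b j) *: m (u i) (v j).
Proof.
rewrite bilin_suml; apply: eq_bigr => i _; rewrite bilinZl bilin_sumr scaler_sumr.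
by apply: eq_bigr => j _; rewrite bilinZr scalerA.
Qed.

End BilinearMaps.

Section Tensors.
Variables (F : fieldType) (n : nat).
Local Notation A := 'rV[F]_n.
Local Notation tensor3 := {ffun 'I_n * 'I_n * 'I_n -> F}.

Lemma sum_pairing_mul (u w : A) (r : seq (A * A)) (f g : A * A -> A) :
  \sum_(p <- r) pairing u (f p) * pairing w (g p) =
  \sum_i \sum_k u 0 i * w 0 k * (\sum_(p <- r) tens2 (f p) (g p)) i k.
Proof.
rewrite /pairing.
under eq_bigr do rewrite big_distrl.
under eq_bigr do under eq_bigr do rewrite big_distrr.
rewrite exchange_big; apply: eq_bigr => i _.
rewrite exchange_big; apply: eq_bigr => k _.
rewrite summxE mulr_sumr; apply: eq_bigr => p _.
by rewrite mxE /=; ring.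
Qed.

Lemma sum_pairing_swap (r : seq (A * A)) u w :
  symmetric_tensor r ->
  \sum_(p <- r) pairing u p.1 * pairing w p.2 =
  \sum_(p <- r) pairing u p.2 * pairing w p.1.
Proof.
by move=> r_sym; rewrite (sum_pairing_mul _ _ _ fst snd) sum_pairing_mul -r_sym.
Qed.

Definition contract3 (u v w : A) (T : tensor3) : F :=
  \sum_i \sum_j \sum_k T (i, j, k) * (u 0 i * v 0 j * w 0 k).

Lemma contract3_is_zmod_morphism u v w : zmod_morphism (contract3 u v w).
Proof.
move=> T T'; rewrite /contract3 -sumrB; apply: eq_bigr => i _.
rewrite -sumrB; apply: eq_bigr => j _; rewrite -sumrB; apply: eq_bigr => k _.
by rewrite !ffunE mulrBl.
Qed.

HB.instance Definition _ u v w :=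
  GRing.isZmodMorphism.Build tensor3 F (contract3 u v w)
    (contract3_is_zmod_morphism u v w).

Lemma contract3_tens3 u v w a b c :
  contract3 u v w (tens3 a b c) = pairing u a * pairing v b * pairing w c.
Proof.
rewrite /contract3 /pairing -mulrA mulr_suml; apply: eq_bigr => i _.
rewrite mulr_suml mulr_sumr; apply: eq_bigr => j _.
by rewrite !mulr_sumr; apply: eq_bigr => k _; rewrite ffunE /=; ring.
Qed.

Lemma contract3_evec (T : tensor3) (a b c : 'I_n) :
  contract3 (evec F a) (evec F b) (evec F c) T = T (a, b, c).
Proof.
have evecE i j : (evec F j : A) 0 i = (i == j)%:R by rewrite mxE eqxx.
rewrite /contract3 !pair_bigA (bigD1 (a, b, c)) //= big1 => [|t].
  by rewrite !evecE !eqxx !mulr1 addr0.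
case: t => [[i j] k]; rewrite !evecE !xpair_eqE -!natrM !mulnb.
by move=> /negPf->; rewrite mulr0.
Qed.

End Tensors.

Section QuadraticForm.
Variables (F : fieldType) (n : nat).
Local Notation A := 'rV[F]_n.
Variables (B : A -> A -> F) (s : seq (A * A)).
Hypothesis B_bilin : bilinear_map (B : A -> A -> F^o).
Hypothesis B_skew : forall x y, B x y = - B y x.
Hypothesis B_nondeg : forall x, (forall y, B x y = 0) -> x = 0.
Hypothesis s_sym : symmetric_tensor s.
Local Notation tensor3 := {ffun 'I_n * 'I_n * 'I_n -> F}.

Lemma formDl x y z : B (x + y) z = B x z + B y z.
Proof. exact: bilinDl B_bilin x y z. Qed.

Lemma formDr x y z : B x (y + z) = B x y + B x z.
Proof. exact: bilinDr B_bilin x y z. Qed.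

Lemma formBr x y z : B x (y - z) = B x y - B x z.
Proof. exact: bilinBr B_bilin x y z. Qed.

Lemma formZl a x z : B (a *: x) z = a * B x z.
Proof. exact: bilinZl B_bilin a x z. Qed.

Lemma formZr a x z : B x (a *: z) = a * B x z.
Proof. exact: bilinZr B_bilin a x z. Qed.

Lemma form_nondeg_r y : (forall x, B x y = 0) -> y = 0.
Proof. by move=> By0; apply: B_nondeg => x; rewrite B_skew By0 oppr0. Qed.

Lemma pairing_phiB x v : pairing (phiB B x) v = B x v.
Proof.
rewrite {2}(row_sum_delta v) (bilin_sumr B_bilin) /pairing.
by apply: eq_bigr => j _; rewrite mxE formZr mulrC.
Qed.

Definition phiB_mx : 'M[F]_n := \matrix_(i, j) B (evec F i) (evec F j).

Lemma phiB_mxE x : phiB B x = x *m phiB_mx.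
Proof.
apply/rowP => j; rewrite !mxE {1}(row_sum_delta x) (bilin_suml B_bilin).
by apply: eq_bigr => i _; rewrite formZl mxE.
Qed.

Lemma phiB_mx_unit : phiB_mx \in unitmx.
Proof.
rewrite -row_free_unit -kermx_eq0; apply/eqP/row_matrixP => i; rewrite row0.
apply: B_nondeg => y; rewrite -pairing_phiB phiB_mxE -row_mul mulmx_ker row0.
by rewrite /pairing big1 // => j _; rewrite mxE mul0r.
Qed.

Lemma phiB_surj u : exists x, phiB B x = u.
Proof. by exists (u *m invmx phiB_mx); rewrite phiB_mxE mulmxKV ?phiB_mx_unit. Qed.

Lemma tensor3_eq0 (T : tensor3) :
  (forall x y z, contract3 (phiB B x) (phiB B y) (phiB B z) T = 0) -> T = 0.
Proof.
move=> T0; apply/ffunP => [[[a b] c]]; rewrite ffunE -contract3_evec.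
have [x <-] := phiB_surj (evec F a); have [y <-] := phiB_surj (evec F b).
by have [z <-] := phiB_surj (evec F c); apply: T0.
Qed.

Definition Pr x := \sum_(p <- s) B x p.1 *: p.2.

Lemma rtilde_phiB x : rtilde s (phiB B x) = Pr x.
Proof. by apply: eq_bigr => p _; rewrite pairing_phiB. Qed.

Lemma Pr_linearP a x y : Pr (a *: x + y) = a *: Pr x + Pr y.
Proof.
rewrite /Pr scaler_sumr -big_split; apply: eq_bigr => p _ /=.
by rewrite formDl formZl scalerDl scalerA.
Qed.

Lemma sum_form_swap x z :
  \sum_(p <- s) B x p.1 * B z p.2 = \sum_(p <- s) B x p.2 * B z p.1.
Proof.
have := sum_pairing_swap (phiB B x) (phiB B z) s_sym.
under eq_bigr do rewrite !pairing_phiB.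
by under [RHS]eq_bigr do rewrite !pairing_phiB.
Qed.

Lemma Pr_swap x : Pr x = \sum_(p <- s) B x p.2 *: p.1.
Proof.
apply/eqP; rewrite -subr_eq0; apply/eqP/form_nondeg_r => w.
rewrite formBr /Pr !(bilin_sumr B_bilin).
under eq_bigr do rewrite formZr.
under [X in _ - X]eq_bigr do rewrite formZr.
by rewrite sum_form_swap subrr.
Qed.

Lemma Pr_selfadjoint z w : B z (Pr w) = B w (Pr z).
Proof.
rewrite /Pr !(bilin_sumr B_bilin).
under eq_bigr do rewrite formZr.
under [RHS]eq_bigr do rewrite formZr.
by rewrite sum_form_swap; apply: eq_bigr => p _; rewrite mulrC.
Qed.

Section Contraction.
Variable m : A -> A -> A.
Hypothesis m_bilin : bilinear_map m.

Lemma form_bilin_sumZ (I J : Type) (r : seq I) (r' : seq J) a u b v w :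
  B w (m (\sum_(i <- r) a i *: u i) (\sum_(j <- r') b j *: v j)) =
  \sum_(i <- r) \sum_(j <- r') a i * b j * B w (m (u i) (v j)).
Proof.
rewrite (bilin_sumZ m_bilin) (bilin_sumr B_bilin); apply: eq_bigr => i _.
by rewrite (bilin_sumr B_bilin); apply: eq_bigr => j _; rewrite formZr.
Qed.

Lemma contract_last x y z :
  \sum_(p <- s) \sum_(q <- s) B x p.1 * B y q.1 * B z (m p.2 q.2)
  = B z (m (Pr x) (Pr y)).
Proof. by rewrite form_bilin_sumZ. Qed.

Lemma contract_middle x y z :
  \sum_(p <- s) \sum_(q <- s) B x p.1 * B y (m p.2 q.1) * B z q.2
  = B y (m (Pr x) (Pr z)).
Proof.
rewrite (Pr_swap z) form_bilin_sumZ.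
by apply: eq_bigr => p _; apply: eq_bigr => q _; ring.
Qed.

Lemma contract_first x y z :
  \sum_(p <- s) \sum_(q <- s) B x (m p.1 q.1) * B y p.2 * B z q.2
  = B x (m (Pr y) (Pr z)).
Proof.
rewrite (Pr_swap y) (Pr_swap z) form_bilin_sumZ.
by apply: eq_bigr => p _; apply: eq_bigr => q _; ring.
Qed.

Lemma contract_first_rev x y z :
  \sum_(p <- s) \sum_(q <- s) B x (m q.1 p.1) * B y p.2 * B z q.2
  = B x (m (Pr z) (Pr y)).
Proof.
rewrite (Pr_swap y) (Pr_swap z) form_bilin_sumZ exchange_big.
by apply: eq_bigr => p _; apply: eq_bigr => q _; ring.
Qed.

Definition RB_defect x y := m (Pr x) (Pr y) - Pr (m (Pr x) y + m x (Pr y)).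

End Contraction.

Lemma contract_PLYBE_P circ : bilinear_map circ ->
  (forall x y z, B (circ x y) z = B x (circ y z - circ z y)) ->
  forall x y z, contract3 (phiB B x) (phiB B y) (phiB B z) (PLYBE_P circ s)
                = B z (RB_defect circ x y).
Proof.
move=> circ_bilin B_circ x y z.
have defectE : B z (RB_defect circ x y) =
    B z (circ (Pr x) (Pr y)) - B y (circ (Pr x) (Pr z))
    + (B x (circ (Pr z) (Pr y)) - B x (circ (Pr y) (Pr z))).
  rewrite formBr Pr_selfadjoint formDl !B_circ [B y _]B_skew B_circ !formBr; ring.
rewrite defectE raddf_sum.
under eq_bigr do rewrite raddf_sum.
under eq_bigr do under eq_bigr do
  rewrite raddfD raddfB /= !contract3_tens3 !pairing_phiB formBr !mulrBl.
under eq_bigr do rewrite big_split !sumrB /=.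
rewrite big_split !sumrB /= (contract_last circ_bilin) (contract_middle circ_bilin).
rewrite [X in _ + (X - _)]exchange_big [X in _ + (_ - X)]exchange_big.
by rewrite (contract_first circ_bilin) (contract_first_rev circ_bilin).
Qed.

Lemma contract_PLYBE_L br : bilinear_map br ->
  (forall x y z, B (br x y) z = B x (br y z + br z y)) ->
  forall x y z, contract3 (phiB B x) (phiB B y) (phiB B z) (PLYBE_L br s)
                = B z (RB_defect br x y).
Proof.
move=> br_bilin B_br x y z.
have defectE : B z (RB_defect br x y) =
    B z (br (Pr x) (Pr y)) + B y (br (Pr x) (Pr z))
    - (B x (br (Pr y) (Pr z)) + B x (br (Pr z) (Pr y))).
  rewrite formBr Pr_selfadjoint formDl !B_br [B y _]B_skew B_br !formDr; ring.
rewrite defectE raddf_sum.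
under eq_bigr do rewrite raddf_sum.
under eq_bigr do under eq_bigr do
  rewrite raddfB raddfD /= !contract3_tens3 !pairing_phiB formDr !mulrDl.
under eq_bigr do rewrite sumrB !big_split /=.
rewrite sumrB !big_split /= (contract_last br_bilin) (contract_middle br_bilin).
by rewrite (contract_first br_bilin) (contract_first_rev br_bilin).
Qed.

Lemma tensor3_eq0_iff_defect (T : tensor3) (d : A -> A -> A) :
  (forall x y z, contract3 (phiB B x) (phiB B y) (phiB B z) T = B z (d x y)) ->
  T = 0 <-> forall x y, d x y = 0.
Proof.
move=> Td; split=> [T0 x y|d0].
  by apply: form_nondeg_r => z; rewrite -Td T0 raddf0.
by apply: tensor3_eq0 => x y z; rewrite Td d0 (bilin0r B_bilin).
Qed.

End QuadraticForm.

Theorem proposition3p24 (F : fieldType) (n : nat)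
  (circ br : 'rV[F]_n -> 'rV[F]_n -> 'rV[F]_n) (B : 'rV[F]_n -> 'rV[F]_n -> F)
  (s : seq ('rV[F]_n * 'rV[F]_n)) :
  [pchar F] =i pred0 ->
  dual_pre_Poisson circ br ->
  quadratic circ br B ->
  symmetric_tensor s ->
  (PLYBE_solution circ br s <->
   Rota_Baxter circ br (fun x => rtilde s (phiB B x))).
Proof.
move=> _ [circ_bilin [br_bilin _]] [B_bilin [B_skew [B_nondeg [B_circ B_br]]]] s_sym.
have RB_defect_eq0 m x y : (RB_defect B s m x y = 0) <->
    m (rtilde s (phiB B x)) (rtilde s (phiB B y)) =
    rtilde s (phiB B (m (rtilde s (phiB B x)) y + m x (rtilde s (phiB B y)))).
  rewrite /RB_defect !(rtilde_phiB s B_bilin).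
  by split=> [/subr0_eq | ->]; rewrite ?subrr.
rewrite /PLYBE_solution /Rota_Baxter.
rewrite (tensor3_eq0_iff_defect B_bilin B_skew B_nondeg
           (contract_PLYBE_P B_bilin B_skew B_nondeg s_sym circ_bilin B_circ)).
rewrite (tensor3_eq0_iff_defect B_bilin B_skew B_nondeg
           (contract_PLYBE_L B_bilin B_skew B_nondeg s_sym br_bilin B_br)).
split=> [[RBc RBb]|[_ [RBc RBb]]].
  split=> [a x y|]; first by rewrite !(rtilde_phiB s B_bilin) (Pr_linearP s B_bilin).
  by split=> x y; apply/RB_defect_eq0.
by split=> x y; apply/RB_defect_eq0.
Qed.
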